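(* Let $\mathcal L$ be any class of modules and let $\mathcal P$ be the class of strict $\mathcal L$-atomic modules. Let $\mathcal L'$ be the union of $\mathcal L$ with the class of all pure-injective modules in $\langle\mathcal L\rangle$, and let $\bar{\mathcal L}$ be the closure of $\mathcal L'$ under direct products, direct limits of directed systems, and locally $\mathcal P$-split sources. Then every strict $\mathcal L$-atomic module is strict $\bar{\mathcal L}$-atomic.
   Context: $R$ is a ring with $1$; modules are left $R$-modules; classes are nonempty. pp formulas and $\phi(M)$ as usual; $\langle\mathcal L\rangle$ is the definable subcategory generated by $\mathcal L$ (the class of modules $N$ with $\phi(N)\subseteq\psi(N)$ for all pp formulas with $\phi(L)\subseteq\psi(L)$ for every $L\in\mathcal L$). $(M,\bar m)$ is an $\mathcal L$-free realization of a pp formula $\phi$ if $\bar m\in\phi(M)$ and for every $L\in\mathcal L$ and $\bar c\in\phi(L)$ there is a homomorphism $M\to L$ sending $\bar m$ to $\bar c$; $M$ is strict $\mathcal L$-atomic if every finite tuple in $M$ is an $\mathcal L$-free realization of some pp formula. For a class $\mathcal P$, a homomorphism $f:A\to B$ is locally $\mathcal P$-split if for every tuple $\bar a$ in $A$, every $P\in\mathcal P$, every tuple $\bar p$ in $P$ and every homomorphism $g:P\to B$ with $g(\bar p)=f(\bar a)$, there is a homomorphism $h:P\to A$ with $h(\bar p)=\bar a$. A locally $\mathcal P$-split source of $B$ is a module $A$ admitting a locally $\mathcal P$-split homomorphism $A\to B$ (in particular, closure under locally $\mathcal P$-split sources includes closure under locally $\mathcal P$-split submodules). *)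

From HB Require Import structures.
From mathcomp Require Import all_boot all_order all_algebra.
Set Implicit Arguments. Unset Strict Implicit. Unset Printing Implicit Defensive.
Import GRing.Theory.
Local Open Scope ring_scope.

(* A pp formula in n free variables x:
     exists y (m variables),  (x,y) satisfies k linear equations with
     coefficient matrix mat : 'M[R]_(k, n + m),
   i.e. for each row i: sum_j mat i j *: z_j = 0, where z = (x, y). *)
Record ppf (R : nzRingType) (n : nat) := PPF {
  pp_m : nat;
  pp_k : nat;
  pp_mat : 'M[R]_(pp_k, n + pp_m) }.

Definition pp_sat (R : nzRingType) (M : lmodType R) (n : nat) (phi : ppf R n)
  (x : 'I_n -> M) : Prop :=
  exists y : 'I_(pp_m phi) -> M,
    forall i : 'I_(pp_k phi),
      \sum_(j < n + pp_m phi)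
         pp_mat phi i j *: (match split j with inl a => x a | inr b => y b end)
      = 0.

Definition defsub (R : nzRingType) (L : lmodType R -> Prop) (N : lmodType R) : Prop :=
  forall (n : nat) (phi psi : ppf R n),
    (forall M : lmodType R, L M -> forall x : 'I_n -> M, pp_sat phi x -> pp_sat psi x) ->
    forall x : 'I_n -> N, pp_sat phi x -> pp_sat psi x.

Definition free_realization (R : nzRingType) (L : lmodType R -> Prop) (M : lmodType R)
  (n : nat) (phi : ppf R n) (x : 'I_n -> M) : Prop :=
  pp_sat phi x /\
  forall L0 : lmodType R, L L0 -> forall c : 'I_n -> L0, pp_sat phi c ->
    exists f : {linear M -> L0}, forall i, f (x i) = c i.

Definition strict_atomic (R : nzRingType) (L : lmodType R -> Prop) (M : lmodType R) : Prop :=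
  forall (n : nat) (x : 'I_n -> M), exists phi : ppf R n, free_realization L phi x.

Definition locally_split (R : nzRingType) (P : lmodType R -> Prop) (A B : lmodType R)
  (f : {linear A -> B}) : Prop :=
  forall (n : nat) (a : 'I_n -> A) (Q : lmodType R), P Q ->
  forall (q : 'I_n -> Q) (g : {linear Q -> B}),
    (forall i, g (q i) = f (a i)) ->
    exists h : {linear Q -> A}, forall i, h (q i) = a i.

Definition is_product (R : nzRingType) (I : Type) (F : I -> lmodType R) (M : lmodType R)
  (p : forall i, {linear M -> F i}) : Prop :=
  forall (N : lmodType R) (g : forall i, {linear N -> F i}),
    exists h : {linear N -> M},
      (forall i x, p i (h x) = g i x) /\
      (forall h' : {linear N -> M}, (forall i x, p i (h' x) = g i x) -> forall x, h' x = h x).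

(* (F, f) is a directed system over the directed preorder (I, le); the maps
   f i j are only constrained when le i j. *)
Definition directed_system (R : nzRingType) (I : Type) (le : I -> I -> Prop)
  (F : I -> lmodType R) (f : forall i j, {linear F i -> F j}) : Prop :=
  inhabited I /\
  (forall i, le i i) /\
  (forall i j k, le i j -> le j k -> le i k) /\
  (forall i j, exists k, le i k /\ le j k) /\
  (forall i x, f i i x = x) /\
  (forall i j k, le i j -> le j k -> forall x, f j k (f i j x) = f i k x).

Definition is_dlimit (R : nzRingType) (I : Type) (le : I -> I -> Prop)
  (F : I -> lmodType R) (f : forall i j, {linear F i -> F j})
  (M : lmodType R) (u : forall i, {linear F i -> M}) : Prop :=
  (forall i j, le i j -> forall x, u j (f i j x) = u i x) /\
  forall (N : lmodType R) (v : forall i, {linear F i -> N}),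
    (forall i j, le i j -> forall x, v j (f i j x) = v i x) ->
    exists h : {linear M -> N},
      (forall i x, h (u i x) = v i x) /\
      (forall h' : {linear M -> N}, (forall i x, h' (u i x) = v i x) -> forall y, h' y = h y).

(* Pure monomorphisms (pp-formula characterization) and pure-injective modules. *)
Definition pure_mono (R : nzRingType) (A B : lmodType R) (f : {linear A -> B}) : Prop :=
  injective f /\
  forall (n : nat) (phi : ppf R n) (a : 'I_n -> A),
    pp_sat phi (fun i => f (a i)) -> pp_sat phi a.

Definition pure_injective (R : nzRingType) (N : lmodType R) : Prop :=
  forall (A B : lmodType R) (f : {linear A -> B}), pure_mono f ->
  forall g : {linear A -> N}, exists h : {linear B -> N}, forall a, h (f a) = g a.

Definition Lprime (R : nzRingType) (L : lmodType R -> Prop) (N : lmodType R) : Prop :=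
  L N \/ (pure_injective N /\ defsub L N).

Inductive lclosure (R : nzRingType) (C P : lmodType R -> Prop) : lmodType R -> Prop :=
| cl_base (M : lmodType R) : C M -> lclosure C P M
| cl_prod (I : Type) (F : I -> lmodType R) (M : lmodType R)
    (p : forall i, {linear M -> F i}) :
    is_product p -> (forall i, lclosure C P (F i)) -> lclosure C P M
| cl_dlim (I : Type) (le : I -> I -> Prop) (F : I -> lmodType R)
    (f : forall i j, {linear F i -> F j}) (M : lmodType R) (u : forall i, {linear F i -> M}) :
    directed_system le f -> is_dlimit le f u ->
    (forall i, lclosure C P (F i)) -> lclosure C P M
| cl_src (A B : lmodType R) (f : {linear A -> B}) :
    locally_split P f -> lclosure C P B -> lclosure C P A.

From mathcomp Require Import all_boot all_order all_algebra.
From HB Require Import structures.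
From mathcomp Require Import boolp.
Set Implicit Arguments. Unset Strict Implicit. Unset Printing Implicit Defensive.
Import GRing.Theory.
Local Open Scope ring_scope.

(* Let M be strict L-atomic and x a tuple of M, and let (M, x) be an
   L-free realization of phi.  Call N a module to which (M, x) "lifts" if every
   realization c of phi in N is the image of x under some homomorphism M -> N.
   Every module of L lifts, so it suffices to show that the class of modules to
   which (M, x) lifts is closed under the operations generating the closure:
   - products: lift componentwise, then assemble (elements of a product are
     determined by their projections);
   - direct limits: c and the witnesses of phi come from some F s, and the
     finitely many equations of phi already hold in some F k;
   - locally P-split sources: M itself is strict L-atomic, i.e. lies in P;
   - pure-injectives N in <L>: every pp formula true of x is true of c, so the
     pushout of M <- R^n -> N is a pure extension of N, and a retraction of it
     sends x to c. *)

Section LinearMaps.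
Variable R : nzRingType.

Definition mklin (U V : lmodType R) (g : U -> V) (gP : linear g) : {linear U -> V} :=
  HB.pack_for {linear U -> V} g (GRing.isLinear.Build R U V *:%R g gP).

Fact ray_is_linear (V : lmodType R) (a : V) : linear (fun r : R^o => r *: a).
Proof. by move=> s r t; rewrite scalerDl scalerA. Qed.

Definition ray (V : lmodType R) (a : V) : {linear R^o -> V} := mklin (ray_is_linear a).
End LinearMaps.

Record submod (R : nzRingType) (V : lmodType R) := Submod {
  smem :> V -> Prop;
  smem0 : smem 0;
  smemB : forall a b, smem a -> smem b -> smem (a - b);
  smemZ : forall r a, smem a -> smem (r *: a) }.

Section Quotient.
Variables (R : nzRingType) (V : lmodType R) (S : submod V).

Lemma smemN a : S a -> S (- a).
Proof. by move=> Sa; have := smemB (smem0 S) Sa; rewrite sub0r. Qed.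

Lemma smemD a b : S a -> S b -> S (a + b).
Proof. by move=> Sa Sb; have := smemB Sa (smemN Sb); rewrite opprK. Qed.

Definition coset_of (v : V) : V -> Prop := fun w => S (w - v).

Definition quot := {C : V -> Prop | exists v, C = coset_of v}.
HB.instance Definition _ := gen_eqMixin quot.
HB.instance Definition _ := gen_choiceMixin quot.

Definition coset (v : V) : quot := exist _ (coset_of v) (ex_intro _ v erefl).

Lemma coset_eq v w : coset v = coset w <-> S (v - w).
Proof.
split=> [/(congr1 sval) /= e | Svw].
  have : coset_of v v by rewrite /coset_of subrr; exact: smem0.
  by rewrite e.
apply: eq_exist; apply: funext => u; apply: propext; rewrite /coset_of.
split=> Su; first by have := smemD Su Svw; rewrite addrA subrK.
by have := smemB Su Svw; rewrite opprB addrA subrK.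
Qed.

Definition qrep (q : quot) : V := projT1 (cid (proj2_sig q)).

Lemma qrepK q : coset (qrep q) = q.
Proof. by case: q => C HC; apply: eq_exist; rewrite /qrep /=; case: (cid HC). Qed.

Lemma quot_ind (P : quot -> Prop) : (forall v, P (coset v)) -> forall q, P q.
Proof. by move=> Pc q; rewrite -(qrepK q). Qed.

Lemma qrep_coset v : S (qrep (coset v) - v).
Proof. by apply/coset_eq; rewrite qrepK. Qed.

Definition qadd q1 q2 := coset (qrep q1 + qrep q2).
Definition qopp q := coset (- qrep q).
Definition qscale r q := coset (r *: qrep q).

Lemma qaddE v w : qadd (coset v) (coset w) = coset (v + w).
Proof. by apply/coset_eq; rewrite opprD addrACA; apply: smemD; apply: qrep_coset. Qed.

Lemma qoppE v : qopp (coset v) = coset (- v).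
Proof. by apply/coset_eq; rewrite -opprD; apply/smemN/qrep_coset. Qed.

Lemma qscaleE r v : qscale r (coset v) = coset (r *: v).
Proof. by apply/coset_eq; rewrite -scalerBr; apply/smemZ/qrep_coset. Qed.

Fact qaddA : associative qadd.
Proof. by elim/quot_ind=> u; elim/quot_ind=> v; elim/quot_ind=> w; rewrite !qaddE addrA. Qed.
Fact qaddC : commutative qadd.
Proof. by elim/quot_ind=> u; elim/quot_ind=> v; rewrite !qaddE addrC. Qed.
Fact qadd0 : left_id (coset 0) qadd.
Proof. by elim/quot_ind=> v; rewrite qaddE add0r. Qed.
Fact qaddN : left_inverse (coset 0) qopp qadd.
Proof. by elim/quot_ind=> v; rewrite qoppE qaddE addNr. Qed.
HB.instance Definition _ := GRing.isZmodule.Build quot qaddA qaddC qadd0 qaddN.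

Fact qscaleA a b q : qscale a (qscale b q) = qscale (a * b) q.
Proof. by elim/quot_ind: q => v; rewrite !qscaleE scalerA. Qed.
Fact qscale1 : left_id 1 qscale.
Proof. by elim/quot_ind=> v; rewrite qscaleE scale1r. Qed.
Fact qscaleDr : right_distributive qscale qadd.
Proof.
by move=> a; elim/quot_ind=> u; elim/quot_ind=> v; rewrite qaddE !qscaleE qaddE scalerDr.
Qed.
Fact qscaleDl q : {morph qscale^~ q : a b / a + b >-> qadd a b}.
Proof. by elim/quot_ind: q => v a b; rewrite !qscaleE qaddE scalerDl. Qed.
HB.instance Definition _ :=
  GRing.Zmodule_isLmodule.Build R quot qscaleA qscale1 qscaleDr qscaleDl.

Fact coset_is_linear : linear coset.
Proof. by move=> a u v; rewrite -qaddE -qscaleE. Qed.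
HB.instance Definition _ := GRing.isLinear.Build R V quot *:%R coset coset_is_linear.

Lemma coset0 v : coset v = 0 <-> S v.
Proof. by rewrite -(linear0 coset) coset_eq subr0. Qed.
End Quotient.

Section Span.
Variables (R : nzRingType) (V : lmodType R) (p : nat) (v : 'I_p -> V).

Definition span_mem (w : V) := exists r : 'I_p -> R, w = \sum_l r l *: v l.

Fact span_mem0 : span_mem 0.
Proof. by exists (fun _ => 0); rewrite big1 // => l _; rewrite scale0r. Qed.
Fact span_memB a b : span_mem a -> span_mem b -> span_mem (a - b).
Proof.
move=> [r1 ->] [r2 ->]; exists (fun l => r1 l - r2 l).
by rewrite -sumrB; apply: eq_bigr => l _; rewrite scalerBl.
Qed.
Fact span_memZ s a : span_mem a -> span_mem (s *: a).
Proof.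
move=> [r ->]; exists (fun l => s * r l).
by rewrite scaler_sumr; apply: eq_bigr => l _; rewrite scalerA.
Qed.
Definition span := Submod span_mem0 span_memB span_memZ.

Lemma span_gen l : span (v l).
Proof.
exists (fun t => (t == l)%:R); rewrite (bigD1 l) //= eqxx scale1r big1 ?addr0 //.
by move=> t /negbTE ->; rewrite scale0r.
Qed.
End Span.

Section DependentProduct.
Variables (R : nzRingType) (I : Type) (F : I -> lmodType R).

Definition dprod := forall i, F i.
HB.instance Definition _ := gen_eqMixin dprod.
HB.instance Definition _ := gen_choiceMixin dprod.

Let dext (a b : dprod) : (forall i, a i = b i) -> a = b :=
  @functional_extensionality_dep _ _ a b.

Definition dzero : dprod := fun i => 0.
Definition dadd (a b : dprod) : dprod := fun i => a i + b i.
Definition dopp (a : dprod) : dprod := fun i => - a i.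
Definition dscale (r : R) (a : dprod) : dprod := fun i => r *: a i.

Fact daddA : associative dadd. Proof. by move=> *; apply: dext => i; apply: addrA. Qed.
Fact daddC : commutative dadd. Proof. by move=> *; apply: dext => i; apply: addrC. Qed.
Fact dadd0 : left_id dzero dadd. Proof. by move=> *; apply: dext => i; apply: add0r. Qed.
Fact daddN : left_inverse dzero dopp dadd.
Proof. by move=> *; apply: dext => i; apply: addNr. Qed.
HB.instance Definition _ := GRing.isZmodule.Build dprod daddA daddC dadd0 daddN.

Fact dscaleA a b v : dscale a (dscale b v) = dscale (a * b) v.
Proof. by apply: dext => i; apply: scalerA. Qed.
Fact dscale1 : left_id 1 dscale. Proof. by move=> v; apply: dext => i; apply: scale1r. Qed.
Fact dscaleDr : right_distributive dscale dadd.
Proof. by move=> a u v; apply: dext => i; apply: scalerDr. Qed.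
Fact dscaleDl v : {morph dscale^~ v : a b / a + b >-> dadd a b}.
Proof. by move=> a b; apply: dext => i; apply: scalerDl. Qed.
HB.instance Definition _ :=
  GRing.Zmodule_isLmodule.Build R dprod dscaleA dscale1 dscaleDr dscaleDl.

Lemma dprodD (a b : dprod) i : (a + b) i = a i + b i. Proof. by []. Qed.
Lemma dprodN (a : dprod) i : (- a) i = - a i. Proof. by []. Qed.
Lemma dprodZ r (a : dprod) i : (r *: a) i = r *: a i. Proof. by []. Qed.
End DependentProduct.

Section Injections.
Variables (R : nzRingType) (A B : lmodType R).
Fact inl_is_linear : linear (fun a : A => (a, 0 : B)).
Proof. by move=> r a b; congr pair; rewrite /= scaler0 addr0. Qed.
Fact inr_is_linear : linear (fun b : B => (0 : A, b)).
Proof. by move=> r a b; congr pair; rewrite /= scaler0 addr0. Qed.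
End Injections.

Definition pp_free (R : nzRingType) n (phi : ppf R n) i (l : 'I_n) :=
  pp_mat phi i (lshift _ l).
Definition pp_bound (R : nzRingType) n (phi : ppf R n) i (b : 'I_(pp_m phi)) :=
  pp_mat phi i (rshift n b).
Arguments pp_free {R n} phi i l.
Arguments pp_bound {R n} phi i b.

Definition pp_eqn (R : nzRingType) (M : lmodType R) n (phi : ppf R n) (x : 'I_n -> M)
    (y : 'I_(pp_m phi) -> M) (i : 'I_(pp_k phi)) : M :=
  \sum_l pp_free phi i l *: x l + \sum_b pp_bound phi i b *: y b.
Arguments pp_eqn {R M n} phi x y i.

Section PPFormulas.
Variable R : nzRingType.

Lemma pp_satP (M : lmodType R) n (phi : ppf R n) (x : 'I_n -> M) :
  pp_sat phi x <-> exists y, forall i, pp_eqn phi x y i = 0.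
Proof.
rewrite /pp_sat /pp_eqn /pp_free /pp_bound.
suff E y i : \sum_(j < n + pp_m phi) pp_mat phi i j *:
      (match split j with inl a => x a | inr b => y b end)
    = \sum_l pp_mat phi i (lshift _ l) *: x l + \sum_b pp_mat phi i (rshift n b) *: y b.
  by split=> -[y Hy]; exists y => i; rewrite ?E // -E.
by rewrite big_split_ord; congr (_ + _); apply: eq_bigr => j _;
  rewrite ?(unsplitK (inl _ j)) ?(unsplitK (inr _ j)).
Qed.

Lemma pp_eqn_hom (M N : lmodType R) (f : {linear M -> N}) n (phi : ppf R n) x y i :
  f (pp_eqn phi x y i) = pp_eqn phi (f \o x) (f \o y) i.
Proof.
by rewrite linearD !linear_sum; congr (_ + _); apply: eq_bigr => j _; rewrite linearZ.
Qed.

Lemma pp_hom (M N : lmodType R) (f : {linear M -> N}) n (phi : ppf R n) (x : 'I_n -> M) :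
  pp_sat phi x -> pp_sat phi (f \o x).
Proof.
move=> /pp_satP[y Hy]; apply/pp_satP; exists (f \o y) => i.
by rewrite -pp_eqn_hom Hy linear0.
Qed.

Definition pp_of n m k (A : 'M[R]_(k, n)) (B : 'M[R]_(k, m)) : ppf R n := PPF (row_mx A B).

Lemma pp_ofP (M : lmodType R) n m k (A : 'M[R]_(k, n)) (B : 'M[R]_(k, m)) (x : 'I_n -> M) :
  pp_sat (pp_of A B) x <->
  exists y : 'I_m -> M, forall i, \sum_l A i l *: x l + \sum_b B i b *: y b = 0.
Proof.
rewrite pp_satP /pp_eqn /pp_free /pp_bound /=.
by under eq_exists => y do under eq_forall => i do
  rewrite (eq_bigr _ (fun l _ => congr1 (fun r => r *: _) (row_mxEl A B i l)))
          (eq_bigr _ (fun b _ => congr1 (fun r => r *: _) (row_mxEr A B i b))).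
Qed.

Definition pp_zero : ppf R 1 := pp_of (1 : 'M[R]_(1, 1)) (0 : 'M[R]_(1, 0)).

Lemma pp_zeroP (V : lmodType R) (v : V) : pp_sat pp_zero (fun _ => v) <-> v = 0.
Proof.
rewrite pp_ofP; split=> [[y /(_ ord0)] | ->].
  by rewrite big_ord1 big_ord0 addr0 mxE scale1r.
by exists (fun _ => 0) => i; rewrite big_ord1 big_ord0 addr0 scaler0.
Qed.

(* A linear map reflecting all pp formulas is injective: it reflects  v = 0. *)
Lemma pp_reflect_injective (U V : lmodType R) (g : {linear U -> V}) :
  (forall p (psi : ppf R p) (a : 'I_p -> U), pp_sat psi (g \o a) -> pp_sat psi a) ->
  injective g.
Proof.
move=> refl a b gab; apply/eqP; rewrite -subr_eq0; apply/eqP/pp_zeroP.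
by apply: refl; apply/pp_zeroP; rewrite /= linearB gab subrr.
Qed.
End PPFormulas.

Section Products.
Variables (R : nzRingType) (I : Type) (F : I -> lmodType R) (P : lmodType R)
  (p : forall i, {linear P -> F i}).
Hypothesis Pprod : is_product p.

(* Elements of a product are determined by their projections: the rays through
   two such elements factor the same cone through P, so they coincide. *)
Lemma product_ext a b : (forall i, p i a = p i b) -> a = b.
Proof.
move=> Eab; have [h [_ h_uniq]] := Pprod (fun i => p i \o ray a).
have ha : forall r, ray a r = h r by apply: h_uniq.
have hb : forall r, ray b r = h r.
  by apply: h_uniq => i r /=; rewrite !linearZ /= Eab.
by have := ha 1; have := hb 1; rewrite /= !scale1r => -> ->.
Qed.
End Products.

Section DirectLimits.
Variables (R : nzRingType) (I : Type) (le : I -> I -> Prop) (F : I -> lmodType R)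
  (f : forall i j, {linear F i -> F j}) (N : lmodType R) (u : forall i, {linear F i -> N}).
Hypotheses (Hsys : directed_system le f) (Hlim : is_dlimit le f u).

Let I_inhabited : inhabited I. Proof. by case: Hsys. Qed.
Let le_trans i j k : le i j -> le j k -> le i k.
Proof. by case: Hsys => _ [_ [H _]]; apply: H. Qed.
Let le_directed i j : exists k, le i k /\ le j k.
Proof. by case: Hsys => _ [_ [_ [H _]]]. Qed.
Let f_comp i j k : le i j -> le j k -> forall a, f j k (f i j a) = f i k a.
Proof. by case: Hsys => _ [_ [_ [_ [_ H]]]]; apply: H. Qed.
Let u_comp i j : le i j -> forall a, u j (f i j a) = u i a.
Proof. by case: Hlim => H _; apply: H. Qed.

Lemma common_bound p (P : 'I_p -> I -> Prop) :
  (forall t i j, le i j -> P t i -> P t j) -> (forall t, exists i, P t i) ->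
  exists s, forall t, P t s.
Proof.
elim: p P => [|p IHp] P Pup Pex; first by case: I_inhabited => i0; exists i0 => -[].
have [s1 Hs1] := IHp (fun t => P (lift ord0 t)) (fun t => Pup _) (fun t => Pex _).
have [s0 Hs0] := Pex ord0; have [k [le0 le1]] := le_directed s0 s1.
exists k => t; case: (unliftP ord0 t) => [t' ->|->]; first exact: Pup le1 (Hs1 t').
exact: Pup le0 Hs0.
Qed.

Definition dlim_image (z : N) := exists i a, u i a = z.

Fact dlim_image0 : dlim_image 0.
Proof. by case: I_inhabited => i0; exists i0, 0; rewrite linear0. Qed.
Fact dlim_imageB a b : dlim_image a -> dlim_image b -> dlim_image (a - b).
Proof.
move=> [i [a' <-]] [j [b' <-]]; have [k [lei lej]] := le_directed i j.
by exists k, (f i k a' - f j k b'); rewrite linearB !u_comp.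
Qed.
Fact dlim_imageZ r a : dlim_image a -> dlim_image (r *: a).
Proof. by move=> [i [a' <-]]; exists i, (r *: a'); rewrite linearZ. Qed.
Definition dlim_image_submod := Submod dlim_image0 dlim_imageB dlim_imageZ.

(* Every element of the limit comes from some F i: the projection onto
   N / (union of the images) and the zero map factor the same (zero) cocone. *)
Lemma dlim_surj z : dlim_image z.
Proof.
pose S := dlim_image_submod.
have cocone i j : le i j -> forall a, (coset S \o u j) (f i j a) = (coset S \o u i) a.
  by move=> lij a /=; rewrite u_comp.
have [h [_ h_uniq]] := Hlim.2 _ (fun i => coset S \o u i) cocone.
have coset_h y : coset S y = h y by apply: h_uniq.
have zero_h y : (\0 : {linear N -> quot S}) y = h y.
  by apply: h_uniq => i a /=; symmetry; apply/coset0; exists i, a.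
by apply/(coset0 S); rewrite coset_h -zero_h.
Qed.

Definition eventually_zero (a : dprod F) := exists i0, forall k, le i0 k -> a k = 0.

Fact eventually_zero0 : eventually_zero 0.
Proof. by case: I_inhabited => i0; exists i0. Qed.
Fact eventually_zeroB a b : eventually_zero a -> eventually_zero b -> eventually_zero (a - b).
Proof.
move=> [i Ha] [j Hb]; have [k [lei lej]] := le_directed i j.
by exists k => l lkl; rewrite dprodD dprodN Ha ?Hb ?subrr //; apply: le_trans lkl.
Qed.
Fact eventually_zeroZ r a : eventually_zero a -> eventually_zero (r *: a).
Proof. by move=> [i Ha]; exists i => k lik; rewrite dprodZ Ha // scaler0. Qed.
Definition eventually_zero_submod :=
  Submod eventually_zero0 eventually_zeroB eventually_zeroZ.

Definition images i (a : F i) : dprod F :=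
  fun k => if pselect (le i k) is left lik then f i k a else 0.

Fact images_is_linear i : linear (@images i).
Proof.
move=> r a b; apply: functional_extensionality_dep => k.
rewrite dprodD dprodZ /images; case: pselect => _; first by rewrite linearP.
by rewrite scaler0 addr0.
Qed.

(* An element of some F i vanishing in the limit already vanishes in some F k:
   the classes of the families [images i] form a cocone into
   (prod F) / (eventually zero families). *)
Lemma dlim_ker i a : u i a = 0 -> exists k, le i k /\ f i k a = 0.
Proof.
move=> uia0; pose E := eventually_zero_submod.
pose v j : {linear F j -> quot E} := coset E \o mklin (@images_is_linear j).
have cocone i1 j : le i1 j -> forall a1, v j (f i1 j a1) = v i1 a1.
  move=> lij a1; apply/coset_eq; exists j => k ljk.
  rewrite dprodD dprodN /= /images.
  case: pselect => [_|[]//]; case: pselect => [_|[]]; last exact: le_trans lij ljk.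
  by rewrite f_comp // subrr.
have [h [h_u _]] := Hlim.2 _ v cocone.
have /coset0 [i0 Hi0] : coset E (images a) = 0 by have := h_u i a; rewrite uia0 linear0.
have [k [lik li0k]] := le_directed i i0.
by exists k; split=> //; have := Hi0 k li0k; rewrite /images; case: pselect.
Qed.

Lemma dlim_lift p (z : 'I_p -> N) : exists s (w : 'I_p -> F s), forall t, u s (w t) = z t.
Proof.
have [s Hs] : exists s, forall t, exists a, u s a = z t.
  apply: common_bound => [t i j lij [a <-] | t]; last exact: dlim_surj.
  by exists (f i j a); rewrite u_comp.
by exists s, (fun t => projT1 (cid (Hs t))) => t; case: (cid (Hs t)).
Qed.

Lemma dlim_kill s p (e : 'I_p -> F s) :
  (forall t, u s (e t) = 0) -> exists k, le s k /\ forall t, f s k (e t) = 0.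
Proof.
move=> ue0; have [k0 Hk0] : exists k0, forall t, le s k0 /\ f s k0 (e t) = 0.
  apply: common_bound => [t i j lij [lsi ei] | t]; last exact: dlim_ker.
  by split; [apply: le_trans lij | rewrite -(f_comp lsi lij) ei linear0].
have [k [lsk lk0k]] := le_directed s k0.
exists k; split=> // t; have [ls0 e0] := Hk0 t.
by rewrite -(f_comp ls0 lk0k) e0 linear0.
Qed.
End DirectLimits.

Section Pushout.
Variables (R : nzRingType) (M N : lmodType R) (n : nat) (x : 'I_n -> M) (c : 'I_n -> N).

Definition push_rel := span (fun l => (x l, - c l)).
Definition pushout := quot push_rel.
Definition push_N : {linear N -> pushout} := coset push_rel \o mklin (@inr_is_linear R M N).
Definition push_M : {linear M -> pushout} := coset push_rel \o mklin (@inl_is_linear R M N).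

Lemma push_commute l : push_M (x l) = push_N (c l).
Proof.
apply/coset_eq; have -> : ((x l, 0) - (0, c l) : M * N) = (x l, - c l).
  by congr pair; rewrite ?subr0 ?sub0r.
exact: span_gen.
Qed.

(* If every pp formula true of x is true of c, then N -> pushout is pure: a relation
   psi on the image of a, split into its M- and N-components, yields a pp formula
   chi true of x, hence of c, whose witnesses correct those of psi in N. *)
Hypothesis type_incl : forall psi : ppf R n, pp_sat psi x -> pp_sat psi c.

Lemma push_N_pure p (psi : ppf R p) (a : 'I_p -> N) :
  pp_sat psi (push_N \o a) -> pp_sat psi a.
Proof.
move=> /pp_satP[y Hy].
pose inr := mklin (@inr_is_linear R M N).
pose y' b := qrep (y b).
have rel i : push_rel (pp_eqn psi (inr \o a) y' i).
  apply/coset0; rewrite pp_eqn_hom -[RHS](Hy i); congr pp_eqn.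
  by apply: funext => b; rewrite /= qrepK.
pose r i := projT1 (cid (rel i)).
have Er i : pp_eqn psi (inr \o a) y' i = \sum_l r i l *: (x l, - c l).
  exact: projT2 (cid (rel i)).
have Efst i : \sum_b pp_bound psi i b *: (y' b).1 = \sum_l r i l *: x l.
  have := congr1 fst (Er i); rewrite /pp_eqn !raddfD !raddf_sum /= => <-.
  by rewrite [X in _ = X + _]big1 ?add0r // => l _; rewrite scaler0.
have Esnd i : pp_eqn psi a (snd \o y') i = - \sum_l r i l *: c l.
  have := congr1 snd (Er i); rewrite /pp_eqn !raddfD !raddf_sum /= => ->.
  by apply: eq_bigr => l _; rewrite scalerN.
pose chi := pp_of (\matrix_(i, l) - r i l) (\matrix_(i, b) pp_bound psi i b).
have /pp_ofP[w Hw] : pp_sat chi c.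
  apply: type_incl; apply/pp_ofP; exists (fst \o y') => i.
  under eq_bigr do rewrite mxE scaleNr.
  under [X in _ + X]eq_bigr do rewrite mxE.
  by rewrite sumrN Efst addNr.
apply/pp_satP; exists (snd \o y' \+ w) => i.
have := Hw i; under eq_bigr do rewrite mxE scaleNr.
under [X in _ + X]eq_bigr do rewrite mxE.
rewrite sumrN -Esnd => <-; rewrite /pp_eqn -addrA -big_split /=.
by congr (_ + _); apply: eq_bigr => b _; rewrite scalerDr.
Qed.

(* Hence, for pure-injective N, a retraction of the pure embedding N -> pushout,
   composed with M -> pushout, sends x to c. *)
Lemma pure_injective_type_hom : pure_injective N ->
  exists g : {linear M -> N}, forall l, g (x l) = c l.
Proof.
move=> Npi.
have pure : pure_mono push_N.
  by split; [apply: pp_reflect_injective|]; move=> *; apply: push_N_pure.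
have [h Hh] := Npi _ _ _ pure idfun.
by exists (h \o push_M) => l; rewrite -[c l]Hh -push_commute.
Qed.
End Pushout.

Section FreeRealizations.
Variables (R : nzRingType) (M : lmodType R) (n : nat) (phi : ppf R n) (x : 'I_n -> M).

Definition lifts_to (N : lmodType R) : Prop :=
  forall c : 'I_n -> N, pp_sat phi c -> exists g : {linear M -> N}, forall l, g (x l) = c l.

(* Products: lift componentwise and assemble by the universal property. *)
Lemma lifts_to_product (I : Type) (F : I -> lmodType R) (P : lmodType R)
    (p : forall i, {linear P -> F i}) :
  is_product p -> (forall i, lifts_to (F i)) -> lifts_to P.
Proof.
move=> Pprod liftF c phi_c.
pose g i := projT1 (cid (liftF i _ (pp_hom (p i) phi_c))).
have gx i l : g i (x l) = p i (c l) by rewrite /g; case: cid.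
have [h [ph _]] := Pprod M g.
by exists h => l; apply: (product_ext Pprod) => i; rewrite ph gx.
Qed.

(* Direct limits: a realization of phi in the limit, together with its witnesses,
   comes from some F s, and its equations already hold in some F k. *)
Lemma lifts_to_dlimit (I : Type) (le : I -> I -> Prop) (F : I -> lmodType R)
    (f : forall i j, {linear F i -> F j}) (N : lmodType R) (u : forall i, {linear F i -> N}) :
  directed_system le f -> is_dlimit le f u -> (forall i, lifts_to (F i)) -> lifts_to N.
Proof.
move=> Hsys Hlim liftF c /pp_satP[y Hy].
have [_ [_ [_ [le_directed _]]]] := Hsys; have [u_comp _] := Hlim.
have [s1 [wc Hwc]] := dlim_lift Hsys Hlim c.
have [s2 [wy Hwy]] := dlim_lift Hsys Hlim y.
have [s [le1 le2]] := le_directed s1 s2.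
pose e i := pp_eqn phi (f s1 s \o wc) (f s2 s \o wy) i.
have ue0 i : u s (e i) = 0.
  rewrite pp_eqn_hom -[RHS](Hy i); congr pp_eqn; apply: funext => l /=;
    by rewrite u_comp ?(Hwc, Hwy).
have [k [lsk Hk]] := dlim_kill Hsys Hlim ue0.
have phi_ck : pp_sat phi (f s k \o (f s1 s \o wc)).
  by apply/pp_satP; exists (f s k \o (f s2 s \o wy)) => i; rewrite -pp_eqn_hom Hk.
have [g Hg] := liftF k _ phi_ck.
by exists (u k \o g) => l /=; rewrite Hg /= !u_comp.
Qed.

(* Locally split sources: (M, x) can be pulled back along a locally P-split map
   because M itself lies in P. *)
Lemma lifts_to_split_source (P : lmodType R -> Prop) (A B : lmodType R) (f : {linear A -> B}) :
  P M -> locally_split P f -> lifts_to B -> lifts_to A.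
Proof.
move=> PM fsplit liftB c phi_c.
have [g Hg] := liftB _ (pp_hom f phi_c).
exact: fsplit n c M PM x g Hg.
Qed.

(* Pure-injectives in the definable subcategory: if (M, x) is an L-free realization
   of phi, then every pp formula true of x holds of any c realizing phi in N. *)
Lemma lifts_to_pure_injective (L : lmodType R -> Prop) (N : lmodType R) :
  free_realization L phi x -> pure_injective N -> defsub L N -> lifts_to N.
Proof.
move=> [_ phi_free] Npi ND c phi_c.
apply: pure_injective_type_hom Npi => psi psi_x.
apply: ND phi_c => L0 L0L z phi_z.
have [g Hg] := phi_free L0 L0L z phi_z.
by have := pp_hom g psi_x; congr pp_sat; apply: funext => l /=; rewrite Hg.
Qed.
End FreeRealizations.

Theorem proposition2p6 (R : nzRingType) (L : lmodType R -> Prop) :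
  (exists M0 : lmodType R, L M0) ->
  forall M : lmodType R, strict_atomic L M ->
    strict_atomic (lclosure (Lprime L) (strict_atomic L)) M.
Proof.
move=> _ M M_atomic n x; have [phi phi_free] := M_atomic n x.
exists phi; split; first by case: phi_free.
move=> N; elim=> {N} [N [LN | [Npi ND]] | I F P p Pprod _ IH
                    | I le F f N u Hsys Hlim _ IH | A B f fsplit _ IH].
- by case: phi_free => _; apply.
- exact: lifts_to_pure_injective phi_free Npi ND.
- exact: lifts_to_product Pprod IH.
- exact: lifts_to_dlimit Hsys Hlim IH.
- exact: lifts_to_split_source M_atomic fsplit IH.
Qed.
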